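(* Let $\psi:C_Z\to\mathbb{R}$ be an increasing convex functional such that $\lim_{z\to+\infty}\psi(n(Z-z)^+)=\psi(0)$ for every $n\in\mathbb{N}$. Then for every $X\in C_Z$ there exists $\varepsilon>0$ with $\lim_{z\to+\infty}\psi(X+\varepsilon(Z-z)^+)=\psi(X)$.
   Context: Fix integers $J\ge0$, $T\ge1$. $\Omega$ is a non-empty subset of $((0,\infty)\times\mathbb{R}^J)^T$ with the Euclidean metric. $Z:\Omega\to[1,\infty)$ is continuous with $\{\omega\in\Omega:Z(\omega)\le z\}$ compact for every $z\in\mathbb{R}_+$. $C_Z$ is the space of continuous $X:\Omega\to\mathbb{R}$ with $X/Z$ bounded. $\psi$ increasing means $\psi(X)\ge\psi(Y)$ whenever $X\ge Y$. *)

From HB Require Import structures.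
From mathcomp Require Import all_boot all_order all_algebra.
From mathcomp Require Import all_classical all_reals all_analysis.
Set Implicit Arguments. Unset Strict Implicit. Unset Printing Implicit Defensive.
Import Order.TTheory GRing.Theory Num.Theory.
Import numFieldNormedType.Exports.
Local Open Scope classical_set_scope.
Local Open Scope ring_scope.

(* A point of ((0,oo) x R^J)^T is encoded as a T x (J+1) real matrix whose
   row t is (s_t, x_t) with s_t = w t ord0 > 0. *)
Definition state_pt (R : realType) (J T : nat) := 'M[R]_(T, J.+1).

Definition in_state_space (R : realType) (J T : nat) (w : state_pt R J T) : Prop :=
  forall t : 'I_T, 0 < w t ord0.

(* C_Z: continuous (on Omega) real functions X with X/Z bounded on Omega.
   Functions are given on the ambient space; only values on Omega matter. *)
Definition C_Z (R : realType) (J T : nat) (Omega : set (state_pt R J T))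
  (Z : state_pt R J T -> R) (X : state_pt R J T -> R) : Prop :=
  {within Omega, continuous X} /\
  exists M : R, forall w, Omega w -> `|X w / Z w| <= M.

Definition increasing_on_CZ (R : realType) (J T : nat) (Omega : set (state_pt R J T))
  (Z : state_pt R J T -> R) (psi : (state_pt R J T -> R) -> R) : Prop :=
  forall X Y, C_Z Omega Z X -> C_Z Omega Z Y ->
    (forall w, Omega w -> Y w <= X w) -> psi Y <= psi X.

Definition convex_on_CZ (R : realType) (J T : nat) (Omega : set (state_pt R J T))
  (Z : state_pt R J T -> R) (psi : (state_pt R J T -> R) -> R) : Prop :=
  forall X Y (l : R), C_Z Omega Z X -> C_Z Omega Z Y -> 0 <= l <= 1 ->
    psi (fun w => l * X w + (1 - l) * Y w) <= l * psi X + (1 - l) * psi Y.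

Definition pos_part (R : realType) (x : R) : R := Num.max x 0.

From HB Require Import structures.
From mathcomp Require Import all_boot all_order all_algebra.
From mathcomp Require Import all_classical all_reals all_analysis.
From mathcomp Require Import ring lra.
Set Implicit Arguments. Unset Strict Implicit. Unset Printing Implicit Defensive.
Import Order.TTheory GRing.Theory Num.Theory.
Import numFieldNormedType.Exports.
Local Open Scope classical_set_scope.
Local Open Scope ring_scope.

(* In fact eps = 1 works.  Put P := (Z - z)^+ and r := 1/n for an integer
   n >= 2; then X + P is the convex combination
     X + P = (1 - 2r) X + r (2X) + r (nP),
   so psi (X + P) <= psi X + r (psi (2X) - 2 psi X + psi (nP)).  As z -> +oo
   the last term tends to r (psi (2X) - 2 psi X + psi 0), which is as small
   as we like for n large, while psi X <= psi (X + P) by monotonicity. *)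

Section C_Z_closure.
Variables (R : realType) (J T : nat) (Omega : set (state_pt R J T)).
Variable Z : state_pt R J T -> R.

Lemma C_Z_add X Y :
  C_Z Omega Z X -> C_Z Omega Z Y -> C_Z Omega Z (fun w => X w + Y w).
Proof.
move=> [cX [M HM]] [cY [N HN]]; split.
  by move=> x; apply: cvgD; [exact: cX | exact: cY].
exists (M + N) => w Ow; rewrite mulrDl; apply: le_trans (ler_normD _ _) _.
by apply: lerD; [exact: HM | exact: HN].
Qed.

Lemma C_Z_scale (c : R) X : C_Z Omega Z X -> C_Z Omega Z (fun w => c * X w).
Proof.
move=> [cX [M HM]]; split.
  by move=> x; apply: cvgMl_tmp; exact: cX.
exists (`|c| * M) => w Ow; rewrite -mulrA normrM.
by apply: ler_wpM2l => //; exact: HM.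
Qed.

Hypothesis Z_ge1 : forall w, Omega w -> 1 <= Z w.
Hypothesis Z_cont : {within Omega, continuous Z}.

Lemma C_Z_pos_part (z : R) : C_Z Omega Z (fun w => pos_part (Z w - z)).
Proof.
split.
  move=> x; apply: (@continuous_max _ _ (fun w : subspace Omega => Z w - z)).
    by apply: cvgB; [exact: Z_cont | exact: cvg_cst].
  exact: cvg_cst.
exists (1 + `|z|) => w Ow.
have Z1 := Z_ge1 Ow.
have Zpos : 0 < Z w by apply: lt_le_trans Z1.
suff bound : `|pos_part (Z w - z)| <= (1 + `|z|) * Z w.
  by rewrite normrM [`|_^-1|]gtr0_norm ?invr_gt0 // ler_pdivrMr.
have zZ : `|z| <= Z w * `|z| by rewrite -[leLHS]mul1r ler_wpM2r.
have zn := ler_norm (- z); rewrite normrN in zn.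
rewrite /pos_part; case: (leP (Z w - z) 0) => [neg | pos].
  by rewrite normr0 mulr_ge0 // ?addr_ge0 // ltW.
rewrite gtr0_norm //; lra.
Qed.

End C_Z_closure.

Section convex_functional_on_CZ.
Variables (R : realType) (J T : nat) (Omega : set (state_pt R J T)).
Variables (Z : state_pt R J T -> R) (psi : (state_pt R J T -> R) -> R).
Hypothesis psi_convex : convex_on_CZ Omega Z psi.

Lemma convex_on_CZ3 (a b c : R) X Y W :
  C_Z Omega Z X -> C_Z Omega Z Y -> C_Z Omega Z W ->
  0 <= a -> 0 <= b -> 0 <= c -> a + b + c = 1 -> c < 1 ->
  psi (fun w => a * X w + b * Y w + c * W w) <=
    a * psi X + b * psi Y + c * psi W.
Proof.
move=> CX CY CW a0 b0 c0 abc c1.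
have s_gt0 : 0 < a + b by lra.
have -> : c = 1 - (a + b) by lra.
have s_neq0 : a + b != 0 by rewrite gt_eqF.
pose V w := (a / (a + b)) * X w + (1 - a / (a + b)) * Y w.
have l_01 : 0 <= a / (a + b) <= 1.
  by rewrite (divr_ge0 a0 (ltW s_gt0)) /= ler_pdivrMr // mul1r lerDl.
have CV : C_Z Omega Z V by apply: C_Z_add; apply: C_Z_scale.
have -> : (fun w => a * X w + b * Y w + (1 - (a + b)) * W w) =
          (fun w => (a + b) * V w + (1 - (a + b)) * W w).
  by apply/funext => w; rewrite /V; field.
have s_01 : 0 <= a + b <= 1 by apply/andP; split; lra.
apply: le_trans (psi_convex CV CW s_01) _.
have psiV := psi_convex CX CY l_01.
have -> : a * psi X + b * psi Y + (1 - (a + b)) * psi W =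
          (a + b) * (a / (a + b) * psi X + (1 - a / (a + b)) * psi Y)
          + (1 - (a + b)) * psi W.
  by field.
by rewrite lerD2r; apply: ler_wpM2l; [exact: ltW | exact: psiV].
Qed.

Lemma psi_add_le (n : nat) X P : (2 <= n)%N ->
  C_Z Omega Z X -> C_Z Omega Z P ->
  psi (fun w => X w + P w) <=
    psi X + n%:R^-1 * (psi (fun w => 2 * X w) - 2 * psi X
                       + psi (fun w => n%:R * P w)).
Proof.
move=> n2 CX CP; set r : R := n%:R^-1.
have n_gt0 : (0 : R) < n%:R by rewrite ltr0n (leq_trans _ n2).
have n_neq0 : n%:R != 0 :> R by rewrite gt_eqF.
have r_le : r <= 2^-1.
  by rewrite lef_pV2 ?posrE // (ler_nat _ 2).
have r_ge0 : 0 <= r by rewrite invr_ge0 ltW.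
have -> : psi (fun w => X w + P w) =
          psi (fun w => (1 - 2 * r) * X w + r * (2 * X w) + r * (n%:R * P w)).
  by congr psi; apply/funext => w; rewrite /r; field.
apply: le_trans (convex_on_CZ3 (a := 1 - 2 * r) (b := r) (c := r)
  CX (C_Z_scale 2 CX) (C_Z_scale n%:R CP) _ _ _ _ _) _; lra.
Qed.

End convex_functional_on_CZ.

Theorem lemmaA2 (R : realType) (J T : nat) (Omega : set (state_pt R J T))
  (Z : state_pt R J T -> R) (psi : (state_pt R J T -> R) -> R) :
  (1 <= T)%N ->
  Omega !=set0 ->
  (forall w, Omega w -> in_state_space w) ->
  {within Omega, continuous Z} ->
  (forall w, Omega w -> 1 <= Z w) ->
  (forall z : R, 0 <= z -> compact [set w | Omega w /\ Z w <= z]) ->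
  increasing_on_CZ Omega Z psi ->
  convex_on_CZ Omega Z psi ->
  (forall n : nat,
     (fun z : R => psi (fun w => n%:R * pos_part (Z w - z))) @ +oo
       --> psi (fun _ => 0)) ->
  forall X, C_Z Omega Z X ->
  exists2 eps : R, 0 < eps &
    (fun z : R => psi (fun w => X w + eps * pos_part (Z w - z))) @ +oo
      --> psi X.
Proof.
move=> _ _ _ Z_cont Z_ge1 _ psi_incr psi_convex psi_tail X CX.
exists 1 => //; apply/cvgrPdist_lt => d d_gt0.
set K := psi (fun w => 2 * X w) - 2 * psi X + (psi (fun _ => 0) + 1).
set n := (Num.truncn (K / d)).+2.
have n_gt0 : (0 : R) < n%:R by rewrite ltr0n.
have K_lt : n%:R^-1 * K < d.
  rewrite mulrC ltr_pdivrMr // mulrC -ltr_pdivrMr //.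
  by apply: lt_le_trans (truncnS_gt _) _; rewrite ler_nat.
have tail_near := (cvgrPdist_lt _ _).1 (psi_tail n) 1 ltr01.
near=> z.
have tail : psi (fun w => n%:R * pos_part (Z w - z)) < psi (fun _ => 0) + 1.
  have dist_lt : `|psi (fun _ => 0) - psi (fun w => n%:R * pos_part (Z w - z))| < 1.
    by near: z; exact: tail_near.
  by move: dist_lt; rewrite ltr_distl ltrBlDr => /andP[].
have CP := C_Z_pos_part Z_ge1 Z_cont z.
rewrite (_ : (fun w => X w + 1 * pos_part (Z w - z)) =
             (fun w => X w + pos_part (Z w - z))); last first.
  by apply/funext => w; rewrite mul1r.
have lower : psi X <= psi (fun w => X w + pos_part (Z w - z)).
  apply: psi_incr => //; first exact: C_Z_add.
  by move=> w _; rewrite lerDl le_max lexx orbT.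
have upper := psi_add_le psi_convex (isT : (2 <= n)%N) CX CP; cbv beta in upper.
have r_ge0 : (0 : R) <= n%:R^-1 by rewrite invr_ge0 ltW.
rewrite distrC ger0_norm ?subr_ge0 //; apply: le_lt_trans K_lt.
rewrite lerBlDl; apply: le_trans upper _.
rewrite lerD2l; apply: ler_wpM2l => //; rewrite lerD2l; exact: ltW.
Unshelve. all: by end_near. Qed.
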